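(* Let $\mathcal K$ be a finite-dimensional complex Hilbert space and let $U$ be a unitary on $\mathbb C^2\otimes\mathcal K$. Define $K=(\langle0|\otimes I)\,U\,(|0\rangle\otimes I)$, so that $U(|0\rangle\otimes|\varphi\rangle)=|0\rangle\otimes K|\varphi\rangle+|1\rangle\otimes|\mathrm{junk}_\varphi\rangle$ for every $|\varphi\rangle\in\mathcal K$. Suppose $K$ is an orthogonal projector. Let $\tilde U$ be any unitary on $\mathbb C^2\otimes\mathcal K$, let $K'=(\langle0|\otimes I)\,\tilde U\,(|0\rangle\otimes I)$, and suppose that $\tilde U$ preserves the action of $K$ up to a scalar, i.e. for every $|\varphi\rangle\in\mathcal K$ there is a scalar $\lambda(\varphi)\in\mathbb C$ with $K'|\varphi\rangle=\lambda(\varphi)K|\varphi\rangle$. Then for every $|\varphi\rangle\in\mathcal K$, $\|K'|\varphi\rangle\|^2\le\|K|\varphi\rangle\|^2$; that is, the success probability of post-selecting the ancilla in $|0\rangle$ cannot be increased.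
   Context: $\|K|\varphi\rangle\|^2$ is the probability of obtaining outcome $0$ when measuring the ancilla (first tensor factor) after applying $U$ to $|0\rangle\otimes|\varphi\rangle$ for a normalized $|\varphi\rangle$; $\tilde U$ models an (oblivious) amplitude amplification protocol. *)

From HB Require Import structures.
From mathcomp Require Import all_boot all_order all_algebra.
Set Implicit Arguments. Unset Strict Implicit. Unset Printing Implicit Defensive.
Import Order.TTheory GRing.Theory Num.Theory.
Local Open Scope ring_scope.

(* The Hilbert space K is C^n (column vectors),
   and C^2 (x) K is C^(n+n), where the first block of n coordinates is
   |0> (x) K and the second block is |1> (x) K. *)

Definition adjmx (C : numClosedFieldType) m n (A : 'M[C]_(m, n)) : 'M[C]_(n, m) :=
  (map_mx Num.conj A)^T.

Definition q_unitary (C : numClosedFieldType) m (U : 'M[C]_m) : Prop :=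
  adjmx U *m U = 1%:M.

Definition q_orth_projector (C : numClosedFieldType) n (P : 'M[C]_n) : Prop :=
  P *m P = P /\ adjmx P = P.

Definition ket0I (C : numClosedFieldType) n : 'M[C]_(n + n, n) := col_mx 1%:M 0.
Definition bra0I (C : numClosedFieldType) n : 'M[C]_(n, n + n) := row_mx 1%:M 0.

Definition Kop (C : numClosedFieldType) n (U : 'M[C]_(n + n)) : 'M[C]_n :=
  bra0I C n *m U *m ket0I C n.

Definition normsq (C : numClosedFieldType) n (v : 'cV[C]_n) : C :=
  \sum_(i < n) `|v i 0| ^+ 2.

(* K' vanishes on every vector (I - K) phi, because there K' phi is a multiple
   of K (I - K) phi = 0; hence K' phi = K' (K phi).  A corner block of a
   unitary is a contraction, so ||K' (K phi)|| <= ||K phi||. *)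

From HB Require Import structures.
From mathcomp Require Import all_boot all_order all_algebra.
Import Order.TTheory GRing.Theory Num.Theory.
Local Open Scope ring_scope.

Section SquaredNorm.

Variable C : numClosedFieldType.

Lemma adjmxM m n p (A : 'M[C]_(m, n)) (B : 'M[C]_(n, p)) :
  adjmx (A *m B) = adjmx B *m adjmx A.
Proof. by rewrite /adjmx map_mxM trmx_mul. Qed.

Lemma normsqE n (v : 'cV[C]_n) : normsq v = (adjmx v *m v) 0 0.
Proof. by rewrite /normsq mxE; apply: eq_bigr => i _; rewrite !mxE normCK mulrC. Qed.

Lemma normsq_ge0 n (v : 'cV[C]_n) : 0 <= normsq v.
Proof. by apply: sumr_ge0 => i _; apply: exprn_ge0. Qed.

Lemma normsq0 n : normsq (0 : 'cV[C]_n) = 0.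
Proof. by apply: big1 => i _; rewrite mxE normr0 expr0n. Qed.

Lemma normsq_col_mx m n (a : 'cV[C]_m) (b : 'cV[C]_n) :
  normsq (col_mx a b) = normsq a + normsq b.
Proof.
rewrite /normsq big_split_ord.
by congr (_ + _); apply: eq_bigr => i _; rewrite ?col_mxEu ?col_mxEd.
Qed.

Lemma normsq_usubmx_le m n (w : 'cV[C]_(m + n)) : normsq (usubmx w) <= normsq w.
Proof. by rewrite -{2}(vsubmxK w) normsq_col_mx lerDl normsq_ge0. Qed.

Lemma normsq_isometry m p (V : 'M[C]_(m, p)) (v : 'cV[C]_p) :
  adjmx V *m V = 1%:M -> normsq (V *m v) = normsq v.
Proof. by move=> VV; rewrite !normsqE adjmxM -mulmxA (mulmxA (adjmx V)) VV mul1mx. Qed.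

End SquaredNorm.

Lemma Kop_mulmx (C : numClosedFieldType) n (U : 'M[C]_(n + n)) (v : 'cV[C]_n) :
  Kop U *m v = usubmx (U *m col_mx v 0).
Proof.
rewrite /Kop /bra0I /ket0I -!mulmxA mul_col_mx mul1mx mul0mx.
by rewrite -{1}(vsubmxK (U *m col_mx v 0)) mul_row_col mul1mx mul0mx addr0.
Qed.

Lemma normsq_Kop_le (C : numClosedFieldType) n (U : 'M[C]_(n + n)) (v : 'cV[C]_n) :
  q_unitary U -> normsq (Kop U *m v) <= normsq v.
Proof.
move=> unitU; rewrite Kop_mulmx.
have -> : normsq v = normsq (U *m col_mx v 0).
  by rewrite normsq_isometry // normsq_col_mx normsq0 addr0.
exact: normsq_usubmx_le.
Qed.

Lemma mulmx_idem_factor (R : pzRingType) n (A P : 'M[R]_n) (v : 'cV[R]_n) :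
  P *m P = P -> (forall w : 'cV[R]_n, exists lam : R, A *m w = lam *: (P *m w)) ->
  A *m (P *m v) = A *m v.
Proof.
move=> idemP parallelAP; apply/eqP; rewrite eq_sym -subr_eq0 -mulmxBr.
have [lam ->] := parallelAP (v - P *m v).
by rewrite mulmxBr mulmxA idemP subrr scaler0.
Qed.

Theorem lemma1 (C : numClosedFieldType) (n : nat) (U Ut : 'M[C]_(n + n)) :
  q_unitary U ->
  q_orth_projector (Kop U) ->
  q_unitary Ut ->
  (forall phi : 'cV[C]_n, exists lam : C, Kop Ut *m phi = lam *: (Kop U *m phi)) ->
  forall phi : 'cV[C]_n, normsq (Kop Ut *m phi) <= normsq (Kop U *m phi).
Proof.
move=> _ [idemK _] unitUt parallelK phi.
rewrite -(@mulmx_idem_factor _ _ _ _ phi idemK parallelK).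
exact: normsq_Kop_le.
Qed.
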